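(* Let $A,B$ be $2n\times2n$ real symmetric positive definite matrices such that $AJB=BJA$ and $AB=BA$. Then $A^sJB^s=B^sJA^s$ for every $s\in\mathbb{R}$.
   Context: $J:=I_n\otimes\begin{pmatrix}0&1\\-1&0\end{pmatrix}$, where $I_n$ is the $n\times n$ identity matrix and $\otimes$ is the Kronecker product. For a real symmetric positive definite matrix $A$ and $s\in\mathbb{R}$, $A^s$ denotes the real symmetric positive definite matrix obtained by raising the eigenvalues of $A$ to the power $s$ in its spectral decomposition. *)

From HB Require Import structures.
From mathcomp Require Import all_boot all_order all_algebra.
From mathcomp Require Import all_classical all_reals all_analysis.
From mathcomp Require Import mxtens.
Set Implicit Arguments. Unset Strict Implicit. Unset Printing Implicit Defensive.
Import Order.TTheory GRing.Theory Num.Theory.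
Local Open Scope ring_scope.
Local Open Scope classical_set_scope.

Definition J2 {R : realType} : 'M[R]_2 :=
  \matrix_(i < 2, j < 2)
    (if (val i == 0%N) && (val j == 1%N) then 1
     else if (val i == 1%N) && (val j == 0%N) then -1 else 0).

Definition Jmx {R : realType} (n : nat) : 'M[R]_(n * 2) :=
  tensmx (1%:M : 'M[R]_n) J2.

Definition sym_pd {R : realType} {m : nat} (A : 'M[R]_m) : Prop :=
  A^T = A /\ (forall v : 'cV[R]_m, v != 0 -> 0 < (v^T *m A *m v) 0 0).

Definition spectral_decomp {R : realType} {m : nat} (A : 'M[R]_m)
  (p : 'M[R]_m * 'rV[R]_m) : Prop :=
  p.1^T *m p.1 = 1%:M /\ (forall i, 0 < p.2 0 i) /\
  A = p.1^T *m diag_mx p.2 *m p.1.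

(* A^s : raise the eigenvalues in (a chosen) spectral decomposition to the
   power s.  For SPD A such a decomposition exists, and the result does not
   depend on the choice. *)
Definition mxpowR {R : realType} {m : nat} (A : 'M[R]_m) (s : R) : 'M[R]_m :=
  let p := xget (0, 0) (spectral_decomp A) in
  p.1^T *m diag_mx (\row_i (p.2 0 i `^ s)) *m p.1.

(* Write A = sum_i a_i P_i and B = sum_j b_j Q_j with spectral projectors. Since A and B
   commute, so do all P_i and Q_j, and the products E_(i,j) = P_i Q_j are joint eigen-
   projectors: A E = E A = a_i E and B E = E B = b_j E.  Sandwiching A X B = B X A between
   E_k and E_l gives a_k b_l E_k X E_l = b_k a_l E_k X E_l, so each block E_k X E_l either
   vanishes or satisfies a_k b_l = b_k a_l, hence a_k^s b_l^s = b_k^s a_l^s.  Expanding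
   A^s X B^s and B^s X A^s along the blocks then gives the same sum. *)
From HB Require Import structures.
From mathcomp Require Import all_boot all_order all_algebra.
From mathcomp Require Import all_classical all_reals all_analysis.
From mathcomp Require Import mxtens.
Set Implicit Arguments. Unset Strict Implicit. Unset Printing Implicit Defensive.
Import Order.TTheory GRing.Theory Num.Theory.
Local Open Scope ring_scope.

Section JointBlocks.
Variables (R : realType) (m : nat) (K : finType).
Implicit Types (E : K -> 'M[R]_m) (X : 'M[R]_m).

Lemma mulmx_sum_scale E X (f g : K -> R) :
  (\sum_k f k *: E k) *m X *m (\sum_l g l *: E l) =
  \sum_k \sum_l (f k * g l) *: (E k *m X *m E l).
Proof.
rewrite mulmx_suml mulmx_suml; apply: eq_bigr => k _.
rewrite mulmx_sumr; apply: eq_bigr => l _.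
by rewrite -!scalemxAl -scalemxAr scalerA.
Qed.

Variables (E : K -> 'M[R]_m) (a b : K -> R) (A B X : 'M[R]_m).
Hypotheses (EA : forall k, E k *m A = a k *: E k) (AE : forall k, A *m E k = a k *: E k).
Hypotheses (EB : forall k, E k *m B = b k *: E k) (BE : forall k, B *m E k = b k *: E k).
Hypothesis AXB : A *m X *m B = B *m X *m A.

Lemma block_scale_swap k l :
  (a k * b l) *: (E k *m X *m E l) = (b k * a l) *: (E k *m X *m E l).
Proof.
have := congr1 (fun M => E k *m M *m E l) AXB.
rewrite /= !mulmxA EA EB -!(mulmxA _ _ (E l)) AE BE.
by rewrite -!scalemxAl -!scalemxAr !scalerA !mulmxA.
Qed.

Hypotheses (a_gt0 : forall k, 0 < a k) (b_gt0 : forall k, 0 < b k).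

Lemma block_powR_swap s k l :
  (a k `^ s * b l `^ s) *: (E k *m X *m E l) =
  (b k `^ s * a l `^ s) *: (E k *m X *m E l).
Proof.
have [->|nz] := eqVneq (E k *m X *m E l) 0; first by rewrite !scaler0.
move/eqP: (block_scale_swap k l).
rewrite -subr_eq0 -scalerBl scalemx_eq0 (negPf nz) orbF subr_eq0 => /eqP eq_ab.
by rewrite -!powRM ?ltW // eq_ab.
Qed.

Lemma powR_sandwich s :
  (\sum_k a k `^ s *: E k) *m X *m (\sum_l b l `^ s *: E l) =
  (\sum_k b k `^ s *: E k) *m X *m (\sum_l a l `^ s *: E l).
Proof.
rewrite !mulmx_sum_scale; apply: eq_bigr => k _; apply: eq_bigr => l _.
exact: block_powR_swap.
Qed.

End JointBlocks.

Section SpectralCalculus.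
Variables (R : realType) (m : nat).
Implicit Types (U : 'M[R]_m) (d : 'rV[R]_m) (f g : R -> R).

Definition spectral_mx U d f : 'M[R]_m := U^T *m diag_mx (\row_i f (d 0 i)) *m U.

Lemma spectral_mx_ext U d f g :
  (forall i, f (d 0 i) = g (d 0 i)) -> spectral_mx U d f = spectral_mx U d g.
Proof. by move=> fg; congr (_ *m diag_mx _ *m _); apply/rowP => i; rewrite !mxE fg. Qed.

Lemma spectral_mx_id U d : spectral_mx U d id = U^T *m diag_mx d *m U.
Proof. by congr (_ *m diag_mx _ *m _); apply/rowP => i; rewrite mxE. Qed.

Lemma scale_spectral_mx U d c f :
  c *: spectral_mx U d f = spectral_mx U d (fun x => c * f x).
Proof.
rewrite /spectral_mx scalemxAl scalemxAr -linearZ.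
by congr (_ *m diag_mx _ *m _); apply/rowP => i; rewrite !mxE.
Qed.

Lemma sum_spectral_mx U d (I : finType) (F : I -> R -> R) :
  \sum_i spectral_mx U d (F i) = spectral_mx U d (fun x => \sum_i F i x).
Proof.
rewrite /spectral_mx -mulmx_suml -mulmx_sumr -linear_sum.
congr (_ *m diag_mx _ *m _); apply/rowP => j.
by rewrite summxE !mxE; apply: eq_bigr => i _; rewrite mxE.
Qed.

Variable U : 'M[R]_m.
Hypothesis U_orth : U^T *m U = 1%:M.

Lemma spectral_mx_mul d f g :
  spectral_mx U d f *m spectral_mx U d g = spectral_mx U d (fun x => f x * g x).
Proof.
rewrite /spectral_mx !mulmxA -(mulmxA _ U) (mulmx1C U_orth) mulmx1.
rewrite -(mulmxA U^T) mulmx_diag.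
by congr (_ *m diag_mx _ *m _); apply/rowP => i; rewrite !mxE.
Qed.

Lemma spectral_mx1 d : spectral_mx U d (fun=> 1) = 1%:M.
Proof.
rewrite /spectral_mx -U_orth; congr (_ *m _).
rewrite -[RHS]mulmx1 -diag_const_mx; congr (_ *m diag_mx _).
by apply/rowP => i; rewrite !mxE.
Qed.

Lemma diag_mx_comm_map d f (Z : 'M[R]_m) :
  diag_mx d *m Z = Z *m diag_mx d ->
  diag_mx (\row_i f (d 0 i)) *m Z = Z *m diag_mx (\row_i f (d 0 i)).
Proof.
rewrite !mul_diag_mx !mul_mx_diag => /matrixP dZ; apply/matrixP => i j.
move: (dZ i j); rewrite !mxE => dZij.
have [->|Zij_neq0] := eqVneq (Z i j) 0; first by rewrite mulr0 mul0r.
have -> : d 0 i = d 0 j by apply: (mulIf Zij_neq0); rewrite dZij mulrC.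
by rewrite mulrC.
Qed.

(* Conjugating by U reduces commutation with U^T D U to commutation with the diagonal D. *)
Lemma spectral_mx_comm d f X :
  spectral_mx U d id *m X = X *m spectral_mx U d id ->
  spectral_mx U d f *m X = X *m spectral_mx U d f.
Proof.
have UUt := mulmx1C U_orth; rewrite spectral_mx_id /spectral_mx => AX.
pose Z := U *m X *m U^T.
have dZ : diag_mx d *m Z = Z *m diag_mx d.
  have := congr1 (fun M => U *m M *m U^T) AX.
  by rewrite /Z !mulmxA UUt mul1mx -!mulmxA UUt mulmx1 !mulmxA.
have UX : U *m X = Z *m U by rewrite /Z -mulmxA U_orth mulmx1.
have UtZ : U^T *m Z = X *m U^T by rewrite /Z !mulmxA U_orth mul1mx.
rewrite -mulmxA UX mulmxA -(mulmxA U^T) (diag_mx_comm_map f dZ).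
by rewrite mulmxA UtZ -!mulmxA.
Qed.

Definition eigen_mult d i : nat := #|[pred k | d 0 k == d 0 i]|.

(* Normalised by the multiplicity, so that summing over all indices i counts each
   eigenspace exactly once. *)
Definition eigenproj d i : 'M[R]_m :=
  spectral_mx U d (fun x => if x == d 0 i then (eigen_mult d i)%:R^-1 else 0).

Lemma sum_eigen_weights d (F : R -> R) j :
  \sum_i F (d 0 i) * (if d 0 j == d 0 i then (eigen_mult d i)%:R^-1 else 0) = F (d 0 j).
Proof.
rewrite (eq_bigr (fun i => if d 0 i == d 0 j then F (d 0 j) / (eigen_mult d j)%:R else 0));
  last by move=> i _; rewrite eq_sym; case: eqP => [dij|_]; rewrite ?mulr0 // /eigen_mult dij.
rewrite -big_mkcond sumr_const.
have -> : #|(fun i => d 0 i == d 0 j)| = eigen_mult d j by apply: eq_card.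
rewrite -[_ *+ _]mulr_natr divfK // pnatr_eq0 -lt0n; apply/card_gt0P.
by exists j; rewrite inE.
Qed.

Lemma spectral_mx_eigenproj d f : spectral_mx U d f = \sum_i f (d 0 i) *: eigenproj d i.
Proof.
under eq_bigr do rewrite scale_spectral_mx.
by rewrite sum_spectral_mx; apply: spectral_mx_ext => j; rewrite sum_eigen_weights.
Qed.

Lemma sum_eigenproj d : \sum_i eigenproj d i = 1%:M.
Proof.
rewrite -(spectral_mx1 d) (spectral_mx_eigenproj d).
by apply: eq_bigr => i _; rewrite scale1r.
Qed.

Lemma eigenproj_mul_id d i : eigenproj d i *m spectral_mx U d id = d 0 i *: eigenproj d i.
Proof.
rewrite spectral_mx_mul scale_spectral_mx; apply: spectral_mx_ext => j /=.
by case: eqP => [->|_]; rewrite ?mulr0 ?mul0r // mulrC.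
Qed.

Lemma id_mul_eigenproj d i : spectral_mx U d id *m eigenproj d i = d 0 i *: eigenproj d i.
Proof.
rewrite spectral_mx_mul scale_spectral_mx; apply: spectral_mx_ext => j /=.
by case: eqP => [->|_]; rewrite ?mulr0.
Qed.

End SpectralCalculus.

Section JointEigenproj.
Variables (R : realType) (m : nat) (U V : 'M[R]_m) (d e : 'rV[R]_m).
Hypotheses (U_orth : U^T *m U = 1%:M) (V_orth : V^T *m V = 1%:M).

Definition joint_eigenproj (k : 'I_m * 'I_m) : 'M[R]_m :=
  eigenproj U d k.1 *m eigenproj V e k.2.

Lemma spectral_mx_jointl f :
  spectral_mx U d f = \sum_k f (d 0 k.1) *: joint_eigenproj k.
Proof.
rewrite -[LHS]mulmx1 -(sum_eigenproj V_orth e) (spectral_mx_eigenproj U).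
rewrite -(pair_bigA _ (fun i j => f (d 0 i) *: joint_eigenproj (i, j))) mulmx_suml.
apply: eq_bigr => i _.
by rewrite mulmx_sumr; apply: eq_bigr => j _; rewrite -scalemxAl.
Qed.

Lemma spectral_mx_jointr g :
  spectral_mx V e g = \sum_k g (e 0 k.2) *: joint_eigenproj k.
Proof.
rewrite -[LHS]mul1mx -(sum_eigenproj U_orth d) (spectral_mx_eigenproj V).
rewrite -(pair_bigA _ (fun i j => g (e 0 j) *: joint_eigenproj (i, j))) mulmx_suml.
apply: eq_bigr => i _.
by rewrite mulmx_sumr; apply: eq_bigr => j _; rewrite -scalemxAr.
Qed.

Let A := spectral_mx U d id.
Let B := spectral_mx V e id.
Hypothesis AB : A *m B = B *m A.

Lemma eigenproj_commB i : eigenproj U d i *m B = B *m eigenproj U d i.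
Proof. exact: spectral_mx_comm AB. Qed.

Lemma eigenproj_commA j : eigenproj V e j *m A = A *m eigenproj V e j.
Proof. exact: spectral_mx_comm (esym AB). Qed.

Lemma joint_eigenproj_mulA k : joint_eigenproj k *m A = d 0 k.1 *: joint_eigenproj k.
Proof.
by rewrite /joint_eigenproj -mulmxA eigenproj_commA mulmxA eigenproj_mul_id // -scalemxAl.
Qed.

Lemma A_mul_joint_eigenproj k : A *m joint_eigenproj k = d 0 k.1 *: joint_eigenproj k.
Proof. by rewrite /joint_eigenproj mulmxA id_mul_eigenproj // -scalemxAl. Qed.

Lemma joint_eigenproj_mulB k : joint_eigenproj k *m B = e 0 k.2 *: joint_eigenproj k.
Proof. by rewrite /joint_eigenproj -mulmxA eigenproj_mul_id // -scalemxAr. Qed.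

Lemma B_mul_joint_eigenproj k : B *m joint_eigenproj k = e 0 k.2 *: joint_eigenproj k.
Proof.
by rewrite /joint_eigenproj mulmxA -eigenproj_commB -mulmxA id_mul_eigenproj // -scalemxAr.
Qed.

End JointEigenproj.

(* When A has no spectral decomposition, [xget] falls back to (0, 0) and every A^s is 0. *)
Lemma mxpowR_spectral (R : realType) (m : nat) (A : 'M[R]_m) :
  (forall s, mxpowR A s = 0) \/
  exists2 p, spectral_decomp A p & forall s, mxpowR A s = spectral_mx p.1 p.2 (fun x => x `^ s).
Proof.
rewrite /mxpowR; case: (pselect (exists p, spectral_decomp A p)) => [ex|nex].
  by right; exists (xget (0, 0) (spectral_decomp A)) => //; apply: xgetPex.
left=> s; rewrite xgetPN /= ?trmx0 ?mul0mx // => p Ap.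
by apply: nex; exists p.
Qed.

Theorem mainTheorem8 (R : realType) (n : nat) (A B : 'M[R]_(n * 2)) :
  sym_pd A -> sym_pd B ->
  A *m Jmx n *m B = B *m Jmx n *m A ->
  A *m B = B *m A ->
  forall s : R,
    mxpowR A s *m Jmx n *m mxpowR B s = mxpowR B s *m Jmx n *m mxpowR A s.
Proof.
move=> _ _ AJB AB s.
have [A0|[[U d] [/= U_orth [d_gt0 defA]] powA]] := mxpowR_spectral A.
  by rewrite !A0 !mul0mx mulmx0.
have [B0|[[V e] [/= V_orth [e_gt0 defB]] powB]] := mxpowR_spectral B.
  by rewrite !B0 mul0mx !mulmx0 mul0mx.
rewrite -spectral_mx_id in defA; rewrite -spectral_mx_id in defB; subst A B.
rewrite !powA !powB /= (spectral_mx_jointl U d e V_orth) (spectral_mx_jointr V d e U_orth) /=.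
apply: (powR_sandwich _ _ _ _ AJB) => [k|k|k|k|k|k].
- exact: joint_eigenproj_mulA.
- exact: A_mul_joint_eigenproj.
- exact: joint_eigenproj_mulB.
- exact: B_mul_joint_eigenproj.
- exact: d_gt0.
- exact: e_gt0.
Qed.
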